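(* Consider a two-player bilinear game with $f_1(x_1,x_2)=x_1^\top Ax_2$, $f_2(x_1,x_2)=x_1^\top B^\top x_2$, $A\in\mathbb{R}^{n_1\times n_2}$, $B\in\mathbb{R}^{n_2\times n_1}$, step sizes $\gamma_1,\gamma_2>0$, and let $W$ be either $W_s$ (simultaneous gradient play) or $W_a$ (alternating gradient play) as defined in the context. Write $a_{pq}$, $b_{pq}$ for the $(p,q)$ entries of $A$, $B$. (1) If $i\neq j$ and coordinate $x_{1,j}$ is disturbance decoupled from coordinate $x_{1,i}$, then $\sum_{\ell=1}^{n_2}b_{\ell i}a_{j\ell}=0$. (2) If $i\neq j$ and coordinate $x_{2,j}$ is disturbance decoupled from coordinate $x_{2,i}$, then $\sum_{\ell=1}^{n_1}b_{j\ell}a_{\ell i}=0$.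
   Context: Player 1 has action $x_1=(x_{1,1},\ldots,x_{1,n_1})\in\mathbb{R}^{n_1}$, player 2 has $x_2=(x_{2,1},\ldots,x_{2,n_2})\in\mathbb{R}^{n_2}$; the joint vector $x=(x_1,x_2)\in\mathbb{R}^{n_1+n_2}$. Simultaneous gradient play $x_1^{k+1}=x_1^k-\gamma_1Ax_2^k$, $x_2^{k+1}=x_2^k-\gamma_2Bx_1^k$ is the linear iteration $x^{k+1}=W_sx^k$ with $W_s=\begin{bmatrix}I&-\gamma_1A\\-\gamma_2B&I\end{bmatrix}$. Alternating gradient play $x_1^{k+1}=x_1^k-\gamma_1Ax_2^k$, $x_2^{k+1}=x_2^k-\gamma_2Bx_1^{k+1}$ is the linear iteration $x^{k+1}=W_ax^k$ with $W_a=\begin{bmatrix}I&-\gamma_1A\\-\gamma_2B&I+\gamma_1\gamma_2BA\end{bmatrix}$. Each coordinate is treated as a separate scalar player whose game-graph matrix is $W$. For coordinates $p\neq q$ of $\mathbb{R}^{n_1+n_2}$, with $\gamma_{(q)}$ the step size of the player owning coordinate $q$, coordinate $p$ is disturbance decoupled from coordinate $q$ if for every initial $x^0$ and every real sequence $(\delta^k)_{k\ge0}$, the iterations $x^{k+1}=Wx^k$ and $y^{k+1}=Wy^k-\gamma_{(q)}\delta^ke_q$ with $y^0=x^0$ satisfy $y^k_p=x^k_p$ for all $k\ge0$ ($e_q$ the $q$-th standard basis vector). *)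

From mathcomp Require Import all_boot all_order all_algebra.
Set Implicit Arguments. Unset Strict Implicit. Unset Printing Implicit Defensive.
Import Order.TTheory GRing.Theory Num.Theory.
Local Open Scope ring_scope.

Section Game.
Variables (R : realFieldType) (n1 n2 : nat).

(* Joint vector x = (x1, x2) is a column vector in 'cV_(n1 + n2);
   coordinate x_{1,i} is index [lshift n2 i], x_{2,j} is index [rshift n1 j]. *)

Definition Wsim (g1 g2 : R) (A : 'M[R]_(n1, n2)) (B : 'M[R]_(n2, n1))
  : 'M[R]_(n1 + n2) :=
  block_mx 1%:M (- (g1 *: A)) (- (g2 *: B)) 1%:M.

Definition Walt (g1 g2 : R) (A : 'M[R]_(n1, n2)) (B : 'M[R]_(n2, n1))
  : 'M[R]_(n1 + n2) :=
  block_mx 1%:M (- (g1 *: A)) (- (g2 *: B)) (1%:M + (g1 * g2) *: (B *m A)).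

Definition step_of (g1 g2 : R) (q : 'I_(n1 + n2)) : R :=
  if split q is inl _ then g1 else g2.

Fixpoint traj (W : 'M[R]_(n1 + n2)) (x0 : 'cV[R]_(n1 + n2)) (k : nat)
  : 'cV[R]_(n1 + n2) :=
  match k with
  | 0 => x0
  | k'.+1 => W *m traj W x0 k'
  end.

Fixpoint dtraj (W : 'M[R]_(n1 + n2)) (gq : R) (q : 'I_(n1 + n2))
  (delta : nat -> R) (x0 : 'cV[R]_(n1 + n2)) (k : nat) : 'cV[R]_(n1 + n2) :=
  match k with
  | 0 => x0
  | k'.+1 => W *m dtraj W gq q delta x0 k' - (gq * delta k') *: delta_mx q 0
  end.

Definition dist_decoupled (g1 g2 : R) (W : 'M[R]_(n1 + n2))
  (p q : 'I_(n1 + n2)) : Prop :=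
  p != q /\
  forall (x0 : 'cV[R]_(n1 + n2)) (delta : nat -> R) (k : nat),
    dtraj W (step_of g1 g2 q) q delta x0 k p 0 = traj W x0 k p 0.

End Game.

From mathcomp Require Import all_boot all_order all_algebra.

(* Feeding a unit impulse into coordinate q from the zero state makes the
   disturbed trajectory equal to -gamma_(q) times column q of W^(k-1), while the
   undisturbed one stays at 0; so decoupling forces (W^k)_(pq) = 0 for every k.
   Both for W_s and W_a the upper-left block of W^2 is I + g1 g2 AB, and the
   lower-right block of W_s^2 (resp. of W_a itself) is I + g1 g2 BA; reading
   off an off-diagonal entry gives the two identities. *)

Set Implicit Arguments.
Unset Strict Implicit.
Unset Printing Implicit Defensive.

Import Order.TTheory GRing.Theory Num.Theory.
Local Open Scope ring_scope.

Section ImpulseResponse.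
Variables (R : realFieldType) (n1 n2 : nat).
Implicit Types (W : 'M[R]_(n1 + n2)) (p q : 'I_(n1 + n2)).

Definition unit_impulse (k : nat) : R := (k == 0)%:R.

Lemma traj0 W k : traj W 0 k = 0.
Proof. by elim: k => //= k ->; rewrite mulmx0. Qed.

Lemma dtrajS W g q delta x0 k :
  dtraj W g q delta x0 k.+1
  = W *m dtraj W g q delta x0 k - (g * delta k) *: delta_mx q 0.
Proof. by []. Qed.

Lemma dtraj_unit_impulse W g q k :
  dtraj W g q unit_impulse 0 k.+1 = - g *: col q (W ^+ k).
Proof.
elim: k => [|k IHk].
  by rewrite dtrajS mulmx0 expr0 colE mul1mx /unit_impulse mulr1 sub0r scaleNr.
rewrite dtrajS IHk /unit_impulse mulr0 scale0r subr0 colE -scalemxAr mulmxA.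
by rewrite exprS mulmxE -colE.
Qed.

Lemma step_of_gt0 (g1 g2 : R) q : 0 < g1 -> 0 < g2 -> 0 < step_of g1 g2 q.
Proof. by rewrite /step_of; case: split. Qed.

Lemma dist_decoupled_expmx_eq0 (g1 g2 : R) W p q :
  step_of g1 g2 q != 0 -> dist_decoupled g1 g2 W p q ->
  forall k, (W ^+ k) p q = 0.
Proof.
move=> gq_neq0 [_ decoupled] k; have := decoupled 0 unit_impulse k.+1.
rewrite dtraj_unit_impulse traj0 !mxE mulNr => /eqP; rewrite oppr_eq0 mulf_eq0.
by rewrite (negbTE gq_neq0) => /eqP.
Qed.

End ImpulseResponse.

Section GradientPlayBlocks.
Variables (R : realFieldType) (n1 n2 : nat).
Variables (g1 g2 : R) (A : 'M[R]_(n1, n2)) (B : 'M[R]_(n2, n1)).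

Lemma ulsubmx_sqr_gradient_block (D : 'M[R]_n2) :
  ulsubmx (block_mx 1%:M (- (g1 *: A)) (- (g2 *: B)) D ^+ 2)
  = 1%:M + (g1 * g2) *: (A *m B).
Proof.
rewrite expr2 -mulmxE mulmx_block block_mxKul mul1mx mulNmx mulmxN opprK.
by rewrite -scalemxAl -scalemxAr scalerA.
Qed.

Lemma ulsubmx_sqr_gradient_play W :
  W = Wsim g1 g2 A B \/ W = Walt g1 g2 A B ->
  ulsubmx (W ^+ 2) = 1%:M + (g1 * g2) *: (A *m B).
Proof. by case=> ->; apply: ulsubmx_sqr_gradient_block. Qed.

Lemma drsubmx_gradient_play W :
  W = Wsim g1 g2 A B \/ W = Walt g1 g2 A B ->
  exists k, drsubmx (W ^+ k) = 1%:M + (g1 * g2) *: (B *m A).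
Proof.
case=> ->; last by exists 1%N; rewrite expr1 /Walt block_mxKdr.
exists 2%N; rewrite expr2 -mulmxE /Wsim mulmx_block block_mxKdr mul1mx.
by rewrite mulNmx mulmxN opprK -scalemxAl -scalemxAr scalerA mulrC addrC.
Qed.

End GradientPlayBlocks.

Lemma offdiag_scalar_add_eq0 (R : idomainType) n (c : R) (M : 'M[R]_n) i j :
  c != 0 -> i != j -> (1%:M + c *: M) i j = 0 -> M i j = 0.
Proof.
move=> c_neq0 ij; rewrite !mxE (negbTE ij) mulr0n add0r => /eqP.
by rewrite mulf_eq0 (negbTE c_neq0) => /eqP.
Qed.

Theorem corollary3 (R : realFieldType) (n1 n2 : nat)
  (A : 'M[R]_(n1, n2)) (B : 'M[R]_(n2, n1)) (g1 g2 : R)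
  (hg1 : 0 < g1) (hg2 : 0 < g2) (W : 'M[R]_(n1 + n2))
  (hW : W = Wsim g1 g2 A B \/ W = Walt g1 g2 A B) :
  (forall i j : 'I_n1, i != j ->
     dist_decoupled g1 g2 W (lshift n2 j) (lshift n2 i) ->
     \sum_(l < n2) B l i * A j l = 0) /\
  (forall i j : 'I_n2, i != j ->
     dist_decoupled g1 g2 W (rshift n1 j) (rshift n1 i) ->
     \sum_(l < n1) B j l * A l i = 0).
Proof.
have g12_neq0 : g1 * g2 != 0 by rewrite mulf_neq0 // lt0r_neq0.
have step_neq0 (q : 'I_(n1 + n2)) : step_of g1 g2 q != 0.
  by rewrite lt0r_neq0 // step_of_gt0.
split=> i j ij decoupled; have ji : j != i by rewrite eq_sym.
- have -> : \sum_(l < n2) B l i * A j l = (A *m B) j i.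
    by rewrite mxE; apply: eq_bigr => l _; rewrite mulrC.
  apply: (offdiag_scalar_add_eq0 g12_neq0 ji).
  rewrite -(ulsubmx_sqr_gradient_play hW) ulsubmxEsub mxE.
  exact: dist_decoupled_expmx_eq0 (step_neq0 _) decoupled 2.
- have -> : \sum_(l < n1) B j l * A l i = (B *m A) j i by rewrite mxE.
  apply: (offdiag_scalar_add_eq0 g12_neq0 ji).
  have [k <-] := drsubmx_gradient_play hW; rewrite drsubmxEsub mxE.
  exact: dist_decoupled_expmx_eq0 (step_neq0 _) decoupled k.
Qed.
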